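(* Let $\mathcal{G}$ be a finite simple undirected graph with vertex set $\mathcal{N}=\{1,2,\ldots,N\}$, $N\ge 1$, and let $\boldsymbol{\mathcal{A}}$ denote the collection of all independent sets of vertices of $\mathcal{G}$ (including the empty set $\Phi$). For $i\in\mathcal{N}$ let $\mathcal{N}_i$ be the set of neighbours of $i$ in $\mathcal{G}$. For each $\mathcal{A}\in\boldsymbol{\mathcal{A}}$ let $\mathcal{B}_{\mathcal{A}}=\{j\in\mathcal{N}\setminus\mathcal{A} : \mathcal{N}_j\cap\mathcal{A}\neq\emptyset\}$ and $\mathcal{U}_{\mathcal{A}}=\mathcal{N}\setminus(\mathcal{A}\cup\mathcal{B}_{\mathcal{A}})$. Given parameters $\rho_i>0$, $i\in\mathcal{N}$, define the probability distribution on $\boldsymbol{\mathcal{A}}$ $$\pi(\mathcal{A})=\frac{\prod_{i\in\mathcal{A}}\rho_i}{\sum_{\mathcal{A}'\in\boldsymbol{\mathcal{A}}}\prod_{j\in\mathcal{A}'}\rho_j}$$ (an empty product equals $1$), and for each $i\in\mathcal{N}$ let $$x_i(\mathcal{G})=\sum_{\mathcal{A}\in\boldsymbol{\mathcal{A}}\,:\, i\in\mathcal{A}\cup\mathcal{U}_{\mathcal{A}}}\pi(\mathcal{A}),\qquad \bar{\Theta}(\mathcal{G})=\sum_{i=1}^N x_i(\mathcal{G}).$$ Let $\alpha(\mathcal{G})$ be the independence number of $\mathcal{G}$ (the cardinality of a maximum independent set). Then, taking $\rho_i=\rho$ for all $i\in\mathcal{N}$ and letting $\rho\to\infty$, we have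 $\bar{\Theta}(\mathcal{G})\to\alpha(\mathcal{G})$.
   Context: In the paper's model, vertices of $\mathcal{G}$ are co-channel WLAN cells, edges join cells that mutually block each other by carrier sensing, $\pi$ is the stationary distribution of the set of cells transmitting, $\rho_i$ is the ''access intensity'' of cell $i$, $x_i(\mathcal{G})$ is the fraction of time cell $i$ is not blocked (its normalized throughput), and $\bar{\Theta}(\mathcal{G})$ is the normalized network throughput. A maximum independent set is an independent set of largest cardinality. *)

From mathcomp Require Import all_boot all_order all_algebra.
From mathcomp Require Import all_classical all_reals all_analysis.
Set Implicit Arguments. Unset Strict Implicit. Unset Printing Implicit Defensive.
Import Order.TTheory GRing.Theory Num.Theory.
Local Open Scope ring_scope.

Section Defs.
Variables (N : nat) (e : rel 'I_N).

Definition simple_graph := symmetric e /\ irreflexive e.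

Definition nbhd (i : 'I_N) : {set 'I_N} := [set j | e i j].

Definition independent (A : {set 'I_N}) : bool :=
  [forall i in A, forall j in A, ~~ e i j].

Definition blocked (A : {set 'I_N}) : {set 'I_N} :=
  [set j in ~: A | nbhd j :&: A != finset.set0].

Definition unblocked (A : {set 'I_N}) : {set 'I_N} :=
  ~: (A :|: blocked A).

Variable R : realType.
Variable rho : 'I_N -> R.

Definition weight (A : {set 'I_N}) : R := \prod_(i in A) rho i.

Definition partition_fn : R := \sum_(A : {set 'I_N} | independent A) weight A.

Definition pi_dist (A : {set 'I_N}) : R := weight A / partition_fn.

Definition xthr (i : 'I_N) : R :=
  \sum_(A : {set 'I_N} | independent A && (i \in A :|: unblocked A)) pi_dist A.

Definition Theta : R := \sum_(i < N) xthr i.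
End Defs.

Definition alpha (N : nat) (e : rel 'I_N) : nat :=
  \max_(A : {set 'I_N} | independent e A) #|A|.

From mathcomp Require Import all_boot all_order all_algebra.
From mathcomp Require Import all_classical all_reals all_analysis.
From mathcomp Require Import lra.
Set Implicit Arguments. Unset Strict Implicit. Unset Printing Implicit Defensive.
Import Order.TTheory GRing.Theory Num.Theory numFieldNormedType.Exports.
Local Open Scope ring_scope.
Local Open Scope classical_set_scope.

(* With equal access intensities, [pi A] is proportional to [rho ^+ #|A|], so
   [Theta - alpha] is a ratio whose denominator is at least [rho ^+ alpha]
   (the weight of one maximum independent set).  In the numerator, a maximum
   independent set [A] contributes [#|A :|: U_A| - alpha = 0], because no vertex
   can be unblocked by [A] without enlarging it; every other term is
   [O(rho ^+ alpha.-1)].  Hence [|Theta - alpha| = O(1/rho)]. *)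

Section IndependenceNumber.
Variables (N : nat) (e : rel 'I_N).

Lemma card_le_alpha A : independent e A -> (#|A| <= alpha e)%N.
Proof. exact: (@leq_bigmax_cond _ (independent e) (fun A : {set 'I_N} => #|A|)). Qed.

Lemma alpha_le_N : (alpha e <= N)%N.
Proof.
apply/bigmax_leqP => A _.
by rewrite -[X in (_ <= X)%N]card_ord max_card.
Qed.

Lemma independent_set0 : independent e finset.set0.
Proof. by apply/forallP => x; rewrite finset.in_set0. Qed.

Lemma alpha_attained : exists2 A, independent e A & #|A| = alpha e.
Proof.
have : (0 < #|independent e|)%N.
  by apply/card_gt0P; exists finset.set0; exact: independent_set0.
by rewrite /alpha => /(eq_bigmax_cond (fun A : {set 'I_N} => #|A|)) [A iA ->]; exists A.
Qed.

Hypothesis e_simple : simple_graph e.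

Lemma independentU1_unblocked A j :
  independent e A -> j \in unblocked e A -> independent e (j |: A).
Proof.
case: e_simple => e_sym e_irr iA.
rewrite /unblocked /blocked !inE negb_or => /andP[jA].
rewrite jA /= => /negPn/eqP nbhdA.
have jA' a : a \in A -> ~~ e j a.
  by move=> aA; apply/negP => eja; have := finset.in_set0 a; rewrite -nbhdA !inE eja aA.
apply/forallP => x; apply/implyP; rewrite finset.in_setU1 => /orP[/eqP->|xA];
  apply/forallP => y; apply/implyP; rewrite finset.in_setU1 => /orP[/eqP->|yA].
- by rewrite e_irr.
- exact: jA'.
- by rewrite e_sym jA'.
- by move/forallP: iA => /(_ x); rewrite xA => /forallP /(_ y); rewrite yA.
Qed.

Lemma unblocked_max_independent A :
  independent e A -> #|A| = alpha e -> unblocked e A = finset.set0.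
Proof.
move=> iA cA; apply/setP => j; rewrite finset.in_set0; apply/negP => jU.
have jA : j \notin A by move: jU; rewrite !inE negb_or => /andP[].
have := card_le_alpha (independentU1_unblocked iA jU).
by rewrite cardsU1 jA cA ltnn.
Qed.

End IndependenceNumber.

Section EqualIntensities.
Variables (R : realType) (N : nat) (e : rel 'I_N) (rho : R).

Local Notation Z := (partition_fn e (fun _ : 'I_N => rho)).

Lemma Theta_const :
  Theta e (fun _ : 'I_N => rho) =
  (\sum_(A | independent e A) rho ^+ #|A| *+ #|A :|: unblocked e A|) / Z.
Proof.
rewrite /Theta /xthr (exchange_big_dep (independent e)) /=; last by move=> i A _ /andP[].
rewrite mulr_suml; apply: eq_bigr => A iA.
rewrite (eq_bigl (fun i => i \in A :|: unblocked e A)); last by move=> i; rewrite iA.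
by rewrite sumr_const /pi_dist /weight prodr_const mulrnAl.
Qed.

Lemma partition_fn_const : Z = \sum_(A | independent e A) rho ^+ #|A|.
Proof. by apply: eq_bigr => A _; rewrite /weight prodr_const. Qed.

Lemma partition_fn_ge : 0 <= rho -> rho ^+ alpha e <= Z.
Proof.
move=> rho_ge0; have [A0 iA0 <-] := alpha_attained e.
rewrite partition_fn_const (bigD1 A0) //= lerDl.
by apply: sumr_ge0 => A _; rewrite exprn_ge0.
Qed.

Lemma Theta_sub_alpha : 0 < rho ->
  Theta e (fun _ : 'I_N => rho) - (alpha e)%:R =
  (\sum_(A | independent e A)
     rho ^+ #|A| * ((#|A :|: unblocked e A|)%:R - (alpha e)%:R)) / Z.
Proof.
move=> rho_gt0.
have Z_gt0 : 0 < Z by apply: lt_le_trans (partition_fn_ge (ltW rho_gt0)); rewrite exprn_gt0.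
rewrite Theta_const -[X in _ - X](mulfK (lt0r_neq0 Z_gt0)) -mulrBl; congr (_ / _).
rewrite partition_fn_const mulr_sumr -sumrB; apply: eq_bigr => A _.
by rewrite mulrBr mulr_natr mulrC.
Qed.

Hypothesis e_simple : simple_graph e.

Lemma weighted_excess_le A : independent e A -> 1 <= rho ->
  `|rho ^+ #|A| * ((#|A :|: unblocked e A|)%:R - (alpha e)%:R)|
  <= N%:R * (rho ^+ alpha e / rho).
Proof.
move=> iA rho_ge1; have rho_gt0 : 0 < rho by lra.
have rho_ge0 : 0 <= rho by lra.
have := card_le_alpha iA; rewrite leq_eqVlt => /orP[/eqP cA|cA_lt].
  rewrite unblocked_max_independent // finset.setU0 cA subrr mulr0 normr0.
  by rewrite mulr_ge0 // divr_ge0 // exprn_ge0.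
rewrite normrM ger0_norm ?exprn_ge0 // mulrC.
apply: ler_pM; rewrite ?normr_ge0 ?exprn_ge0 //.
  have U_le : ((#|A :|: unblocked e A|)%:R : R) <= N%:R.
    by rewrite ler_nat -[X in (_ <= X)%N]card_ord max_card.
  have alpha_le : ((alpha e)%:R : R) <= N%:R by rewrite ler_nat alpha_le_N.
  have U_ge0 := ler0n R #|A :|: unblocked e A|.
  have alpha_ge0 := ler0n R (alpha e).
  by rewrite ler_norml; apply/andP; split; lra.
by rewrite ler_pdivlMr // -exprSr; apply: ler_weXn2l.
Qed.

Lemma Theta_dist_le : 1 <= rho ->
  `|(alpha e)%:R - Theta e (fun _ : 'I_N => rho)|
  <= (N * #|independent e|)%:R / rho.
Proof.
move=> rho_ge1; have rho_gt0 : 0 < rho by lra.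
have Z_ge := partition_fn_ge (ltW rho_gt0).
have Z_gt0 : 0 < Z by apply: lt_le_trans Z_ge; rewrite exprn_gt0.
rewrite distrC Theta_sub_alpha // normrM normfV (gtr0_norm Z_gt0) ler_pdivrMr //.
have excess_le : `|\sum_(A | independent e A)
    rho ^+ #|A| * ((#|A :|: unblocked e A|)%:R - (alpha e)%:R)|
    <= (N * #|independent e|)%:R * (rho ^+ alpha e / rho).
  rewrite natrM mulr_natr -sumr_const mulr_suml.
  apply: le_trans (ler_norm_sum _ _ _) _.
  by apply: ler_sum => A iA; apply: weighted_excess_le.
apply: le_trans excess_le _.
by rewrite mulrA mulrAC; apply: ler_wpM2l; rewrite ?divr_ge0 // ltW.
Qed.

End EqualIntensities.

Lemma cvg_pinfty_dist_le_inv (R : realType) (f : R -> R) (l K : R) :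
  (forall x, 1 <= x -> `|l - f x| <= K / x) -> f x @[x --> +oo] --> l.
Proof.
move=> f_dist; apply/cvgrPdist_le => eps eps_gt0.
have K_ge0 : 0 <= K.
  by have := f_dist 1 (lexx 1); rewrite divr1; apply: le_trans.
have K_eps_ge0 : 0 <= K / eps by rewrite divr_ge0 // ltW.
apply: filterS (nbhs_pinfty_gt (r := 1 + K / eps) _); last by rewrite num_real.
move=> x x_gt; have x_gt0 : 0 < x by lra.
apply: le_trans (f_dist x _) _; first by lra.
by rewrite ler_pdivrMr // mulrC -ler_pdivrMr //; lra.
Qed.

Theorem theorem1 (R : realType) (N : nat) (e : rel 'I_N) :
  (0 < N)%N -> simple_graph e ->
  Theta e (fun _ : 'I_N => rho) @[rho --> +oo] --> ((alpha e)%:R : R).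
Proof.
move=> _ e_simple; apply: cvg_pinfty_dist_le_inv => rho rho_ge1.
exact: Theta_dist_le.
Qed.
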